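(* Let $A$ be an abelian category having all products and all coproducts indexed by (small) sets, and let $\Lambda$ be a generator of $A$. Let $C$ be a closed subcategory of $A$ and set $I = I_\Lambda(C)$. Then $\Lambda/I$ is an object of $C$ and $\Lambda/I$ is a generator for $C$. Consequently, if $C$ and $C'$ are distinct closed subcategories of $A$, then $I_\Lambda(C)\neq I_\Lambda(C')$.
   Context: A full subcategory $C$ of $A$ is called closed if it is closed under (set-indexed) products, coproducts, subquotients (quotients of subobjects), and isomorphisms. For a closed subcategory $C$, the kernels of all morphisms from $\Lambda$ to objects of $C$ form a set of subobjects of $\Lambda$, and $I_\Lambda(C)$ is defined as the intersection of all these kernels. *)

From HB Require Import structures.
From mathcomp Require Import all_boot all_algebra.
Set Implicit Arguments. Unset Strict Implicit. Unset Printing Implicit Defensive.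
Import GRing.Theory.
Local Open Scope ring_scope.

(* the universe of "(small) sets" used as index types of products/coproducts *)
Definition SmallType : Type := Type.

Record preadditive_category := PreAdditive {
  Obj : Type;
  Hom : Obj -> Obj -> zmodType;
  comp : forall X Y Z : Obj, Hom Y Z -> Hom X Y -> Hom X Z;
  idm : forall X : Obj, Hom X X;
  compA : forall X Y Z W (h : Hom Z W) (g : Hom Y Z) (f : Hom X Y),
      comp h (comp g f) = comp (comp h g) f;
  comp1m : forall X Y (f : Hom X Y), comp (idm Y) f = f;
  compm1 : forall X Y (f : Hom X Y), comp f (idm X) = f;
  compDl : forall X Y Z (g g' : Hom Y Z) (f : Hom X Y),
      comp (g + g') f = comp g f + comp g' f;
  compDr : forall X Y Z (g : Hom Y Z) (f f' : Hom X Y),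
      comp g (f + f') = comp g f + comp g f'
}.

Arguments comp {p X Y Z}.
Arguments idm {p}.

Section Defs.
Variable A : preadditive_category.
Local Notation Ob := (Obj A).
Implicit Types X Y Z W S K Q L T P : Ob.

Definition mono X Y (m : Hom X Y) : Prop :=
  forall W (g h : Hom W X), comp m g = comp m h -> g = h.

Definition epi X Y (e : Hom X Y) : Prop :=
  forall W (g h : Hom Y W), comp g e = comp h e -> g = h.

Definition is_iso X Y (f : Hom X Y) : Prop :=
  exists g : Hom Y X, comp g f = idm X /\ comp f g = idm Y.

Definition is_kernel X Y K (f : Hom X Y) (k : Hom K X) : Prop :=
  comp f k = 0 /\
  forall W (g : Hom W X), comp f g = 0 ->
    exists h : Hom W K, comp k h = g /\ forall h', comp k h' = g -> h' = h.

Definition is_cokernel X Y Q (f : Hom X Y) (q : Hom Y Q) : Prop :=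
  comp q f = 0 /\
  forall W (g : Hom Y W), comp g f = 0 ->
    exists h : Hom Q W, comp h q = g /\ forall h', comp h' q = g -> h' = h.

Definition is_zero_object (Z : Ob) : Prop :=
  (forall X (f g : Hom Z X), f = g) /\ (forall X (f g : Hom X Z), f = g).

Definition is_product (I : SmallType) (F : I -> Ob) (P : Ob)
    (p : forall i, Hom P (F i)) : Prop :=
  forall W (g : forall i, Hom W (F i)),
    exists h : Hom W P, (forall i, comp (p i) h = g i) /\
      forall h', (forall i, comp (p i) h' = g i) -> h' = h.

Definition is_coproduct (I : SmallType) (F : I -> Ob) (P : Ob)
    (c : forall i, Hom (F i) P) : Prop :=
  forall W (g : forall i, Hom (F i) W),
    exists h : Hom P W, (forall i, comp h (c i) = g i) /\
      forall h', (forall i, comp h' (c i) = g i) -> h' = h.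

Definition is_abelian : Prop :=
  (exists Z : Ob, is_zero_object Z) /\
  (forall X Y : Ob, exists P (p : forall b : bool, Hom P (if b then X else Y)),
      is_product p) /\
  (forall X Y (f : Hom X Y), exists K (k : Hom K X), is_kernel f k) /\
  (forall X Y (f : Hom X Y), exists Q (q : Hom Y Q), is_cokernel f q) /\
  (forall X Y (m : Hom X Y), mono m -> exists Z (f : Hom Y Z), is_kernel f m) /\
  (forall X Y (e : Hom X Y), epi e -> exists Z (f : Hom Z X), is_cokernel f e).

Definition has_set_products : Prop :=
  forall (I : SmallType) (F : I -> Ob), exists P (p : forall i, Hom P (F i)),
    is_product p.

Definition has_set_coproducts : Prop :=
  forall (I : SmallType) (F : I -> Ob), exists P (c : forall i, Hom (F i) P),
    is_coproduct c.

Definition is_generator (G : Ob) : Prop :=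
  forall X Y (f g : Hom X Y), f <> g ->
    exists h : Hom G X, comp f h <> comp g h.

Definition is_generator_for (Cl : Ob -> Prop) (G : Ob) : Prop :=
  forall X Y, Cl X -> Cl Y -> forall (f g : Hom X Y), f <> g ->
    exists h : Hom G X, comp f h <> comp g h.

Definition closed_subcategory (Cl : Ob -> Prop) : Prop :=
  (forall X Y (f : Hom X Y), is_iso f -> Cl X -> Cl Y) /\
  (forall (I : SmallType) (F : I -> Ob) P (p : forall i, Hom P (F i)),
      is_product p -> (forall i, Cl (F i)) -> Cl P) /\
  (forall (I : SmallType) (F : I -> Ob) P (c : forall i, Hom (F i) P),
      is_coproduct c -> (forall i, Cl (F i)) -> Cl P) /\
  (forall X S Y (m : Hom S X) (e : Hom S Y), Cl X -> mono m -> epi e -> Cl Y).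

Definition le_sub (L S T : Ob) (s : Hom S L) (t : Hom T L) : Prop :=
  exists h : Hom S T, comp t h = s.

Definition kernel_into (Cl : Ob -> Prop) (L K : Ob) (k : Hom K L) : Prop :=
  exists X (f : Hom L X), Cl X /\ is_kernel f k.

(* i : I -> L is (a representative of) I_L(Cl), the intersection of the
   subobjects of L which are kernels of morphisms L -> X, X in Cl *)
Definition is_I (Cl : Ob -> Prop) (L I : Ob) (i : Hom I L) : Prop :=
  mono i /\
  (forall K (k : Hom K L), kernel_into Cl k -> le_sub i k) /\
  (forall S (s : Hom S L), mono s ->
     (forall K (k : Hom K L), kernel_into Cl k -> le_sub s k) -> le_sub s i).

End Defs.

(* The kernels of the maps from the generator L into objects of Cl are all
   detected by the endomorphisms of L they contain, so there is only a set of
   them, and the product of representatives gives one map f : L -> P with P in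
   Cl whose kernel is I = I_L(Cl).  Then L/I is the image of f, a subobject of
   P, hence lies in Cl; every map from L to an object of Cl kills I, so maps out
   of L that separate two morphisms of Cl factor through L/I.  Finally every
   X in Cl is a quotient of a coproduct of copies of the generator L/I, so Cl
   is the closure of L/I, and I determines Cl. *)
From Pilot Require Import Defs.
From mathcomp Require Import ssreflect ssrfun ssrbool eqtype ssralg.
From Stdlib Require Import Classical ClassicalEpsilon.
Import GRing.Theory.
Local Open Scope ring_scope.
Set Implicit Arguments. Unset Strict Implicit.

Local Notation comp := Defs.comp.
Local Notation compA := Defs.compA.

Section Preadditive.
Variable A : preadditive_category.
Implicit Types X Y Z W K Q : Obj A.

Lemma comp0m X Y Z (f : Hom X Y) : comp (0 : Hom Y Z) f = 0.
Proof.
have H := compDl (0 : Hom Y Z) 0 f; rewrite addr0 in H.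
by apply: (addrI (comp (0 : Hom Y Z) f)); rewrite addr0 -H.
Qed.

Lemma compm0 X Y Z (g : Hom Y Z) : comp g (0 : Hom X Y) = 0.
Proof.
have H := compDr g (0 : Hom X Y) 0; rewrite addr0 in H.
by apply: (addrI (comp g (0 : Hom X Y))); rewrite addr0 -H.
Qed.

Lemma compNl X Y Z (g : Hom Y Z) (f : Hom X Y) : comp (- g) f = - comp g f.
Proof.
have H : comp g f + comp (- g) f = 0 by rewrite -compDl subrr comp0m.
by apply: (addrI (comp g f)); rewrite H subrr.
Qed.

Lemma compBl X Y Z (g h : Hom Y Z) (f : Hom X Y) :
  comp (g - h) f = comp g f - comp h f.
Proof. by rewrite compDl compNl. Qed.

Lemma epi_cancel0 X Y (e : Hom X Y) :
  (forall W (u : Hom Y W), comp u e = 0 -> u = 0) -> epi e.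
Proof.
move=> cancel0 W g h ge_he; apply/eqP; rewrite -subr_eq0; apply/eqP.
by apply: cancel0; rewrite compBl ge_he subrr.
Qed.

Lemma mono_id X : mono (idm X).
Proof. by move=> W g h; rewrite !comp1m. Qed.

Lemma mono_comp X Y Z (a : Hom Y Z) (b : Hom X Y) :
  mono a -> mono b -> mono (comp a b).
Proof. by move=> mono_a mono_b W g h; rewrite -!compA => /mono_a /mono_b. Qed.

Lemma epi_of_comp X Y Z (r : Hom Y Z) (e : Hom X Y) : epi (comp r e) -> epi r.
Proof. by move=> epi_re W g h gr_hr; apply: epi_re; rewrite !compA gr_hr. Qed.

Lemma kernel_factor X Y K W (f : Hom X Y) (k : Hom K X) (g : Hom W X) :
  is_kernel f k -> comp f g = 0 -> le_sub g k.
Proof. by move=> [_ univ] /univ [h [kh _]]; exists h. Qed.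

Lemma cokernel_factor X Y Q W (f : Hom X Y) (q : Hom Y Q) (g : Hom Y W) :
  is_cokernel f q -> comp g f = 0 -> exists h : Hom Q W, comp h q = g.
Proof. by move=> [_ univ] /univ [h [hq _]]; exists h. Qed.

Lemma kernel_mono X Y K (f : Hom X Y) (k : Hom K X) : is_kernel f k -> mono k.
Proof.
move=> [fk0 univ] W g h kg_kh.
have fkg0 : comp f (comp k g) = 0 by rewrite compA fk0 comp0m.
have [? [_ uniq]] := univ W (comp k g) fkg0.
by rewrite (uniq g erefl) (uniq h (esym kg_kh)).
Qed.

Lemma cokernel_epi X Y Q (f : Hom X Y) (q : Hom Y Q) : is_cokernel f q -> epi q.
Proof.
move=> [qf0 univ] W g h gq_hq.
have gqf0 : comp (comp g q) f = 0 by rewrite -compA qf0 compm0.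
have [? [_ uniq]] := univ W (comp g q) gqf0.
by rewrite (uniq g erefl) (uniq h (esym gq_hq)).
Qed.

Lemma cokernel0_epi X Y Q (f : Hom X Y) (q : Hom Y Q) :
  is_cokernel f q -> q = 0 -> epi f.
Proof.
move=> cok_q q0; apply: epi_cancel0 => W u uf0.
by have [w <-] := cokernel_factor cok_q uf0; rewrite q0 compm0.
Qed.

Lemma cokernel_le_sub X Y L Q (i : Hom X L) (i' : Hom Y L) (q : Hom L Q) :
  le_sub i i' -> le_sub i' i -> is_cokernel i q -> is_cokernel i' q.
Proof.
move=> [t it] [t' i't] [qi0 univ]; split.
  by rewrite -i't compA qi0 comp0m.
by move=> W g gi'0; apply: univ; rewrite -it compA gi'0 comp0m.
Qed.

End Preadditive.

Section Abelian.
Variables (A : preadditive_category) (abA : is_abelian A).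
Implicit Types X Y Z W : Obj A.

Lemma kernel_exists X Y (f : Hom X Y) : exists K (k : Hom K X), is_kernel f k.
Proof. by case: abA => _ [_ [? _]]. Qed.

Lemma cokernel_exists X Y (f : Hom X Y) : exists Q (q : Hom Y Q), is_cokernel f q.
Proof. by case: abA => _ [_ [_ [? _]]]. Qed.

Lemma mono_is_kernel X Y (m : Hom X Y) :
  mono m -> exists Z (f : Hom Y Z), is_kernel f m.
Proof. by case: abA => _ [_ [_ [_ [mono_ker _]]]]; apply: mono_ker. Qed.

Lemma epi_is_cokernel X Y (e : Hom X Y) :
  epi e -> exists Z (f : Hom Z X), is_cokernel f e.
Proof. by case: abA => _ [_ [_ [_ [_ epi_coker]]]]; apply: epi_coker. Qed.

(* The image of f is the kernel m of its cokernel.  If u kills the induced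
   e : X -> M, then m composed with the kernel of u is a mono through which f
   factors; being a kernel, it contains the image m, so ker u splits and u = 0. *)
Lemma image_factorization X Y (f : Hom X Y) :
  exists M (m : Hom M Y) (e : Hom X M), [/\ mono m, epi e & comp m e = f].
Proof.
have [C [c cok_c]] := cokernel_exists f.
have [M [m ker_m]] := kernel_exists c.
have [e me] := kernel_factor ker_m (proj1 cok_c).
have mono_m := kernel_mono ker_m.
exists M, m, e; split=> //; apply: epi_cancel0 => W u ue0.
have [K [k ker_k]] := kernel_exists u.
have [e' ke'] := kernel_factor ker_k ue0.
have [Z [h ker_mk]] := mono_is_kernel (mono_comp mono_m (kernel_mono ker_k)).
have hf0 : comp h f = 0 by rewrite -me -ke' (compA m) compA (proj1 ker_mk) comp0m.
have [h' h'c] := cokernel_factor cok_c hf0.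
have hm0 : comp h m = 0 by rewrite -h'c -compA (proj1 ker_m) compm0.
have [v mkv] := kernel_factor ker_mk hm0.
have kv : comp k v = idm M by apply: mono_m; rewrite compA mkv compm1.
by rewrite -(compm1 u) -kv compA (proj1 ker_k) comp0m.
Qed.

Lemma epi_factor X Y Z (e : Hom X Y) (q : Hom X Z) :
  epi e -> (forall W (g : Hom W X), comp e g = 0 -> comp q g = 0) ->
  exists r : Hom Y Z, comp r e = q.
Proof.
move=> /epi_is_cokernel [W [f cok_e]] ker_e_sub.
exact: cokernel_factor cok_e (ker_e_sub _ _ (proj1 cok_e)).
Qed.

End Abelian.

Section Closed.
Variables (A : preadditive_category) (Cl : Obj A -> Prop).
Hypothesis closedCl : closed_subcategory Cl.

Lemma closed_product (I : SmallType) (F : I -> Obj A) P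
    (p : forall i, Hom P (F i)) :
  is_product p -> (forall i, Cl (F i)) -> Cl P.
Proof. by case: closedCl => _ [closed_prod _]; apply: closed_prod. Qed.

Lemma closed_coproduct (I : SmallType) (F : I -> Obj A) P
    (c : forall i, Hom (F i) P) :
  is_coproduct c -> (forall i, Cl (F i)) -> Cl P.
Proof. by case: closedCl => _ [_ [closed_coprod _]]; apply: closed_coprod. Qed.

Lemma closed_subquotient X S Y (m : Hom S X) (e : Hom S Y) :
  Cl X -> mono m -> epi e -> Cl Y.
Proof. by case: closedCl => _ [_ [_ closed_subq]]; apply: closed_subq. Qed.

Lemma closed_quotient X Y (e : Hom X Y) : Cl X -> epi e -> Cl Y.
Proof. by move=> ClX; apply: closed_subquotient ClX (mono_id (X := X)). Qed.

End Closed.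

Section IdealOfClosedSubcategory.
Variables (A : preadditive_category) (L : Obj A) (Cl : Obj A -> Prop).
Hypotheses (abA : is_abelian A) (closedCl : closed_subcategory Cl).

Lemma I_annihilated I (i : Hom I L) X (f : Hom L X) :
  is_I Cl i -> Cl X -> comp f i = 0.
Proof.
move=> [_ [i_le _]] ClX; have [K [k ker_k]] := kernel_exists abA f.
have [t <-] := i_le K k (ex_intro _ X (ex_intro _ f (conj ClX ker_k))).
by rewrite compA (proj1 ker_k) comp0m.
Qed.

Lemma le_sub_I I (i : Hom I L) W (g : Hom W L) :
  is_I Cl i -> (forall X (f : Hom L X), Cl X -> comp f g = 0) -> le_sub g i.
Proof.
move=> [_ [_ i_max]] g_killed.
have [M [m [e [mono_m epi_e me]]]] := image_factorization abA g.
have [t mt] : le_sub m i.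
  apply: i_max mono_m _ => K k [X [f [ClX ker_k]]].
  apply: kernel_factor ker_k _; apply: epi_e.
  by rewrite -compA me comp0m g_killed.
by exists (comp t e); rewrite compA mt.
Qed.

Lemma cokernel_I_generator I (i : Hom I L) Q (q : Hom L Q) :
  is_generator L -> is_I Cl i -> is_cokernel i q -> is_generator_for Cl Q.
Proof.
move=> genL Ii cok_q X Y ClX _ a b a_neq_b.
have [h ah_neq_bh] := genL _ _ a b a_neq_b.
have [h' h'q] := cokernel_factor cok_q (I_annihilated h Ii ClX).
by exists h' => ah'_bh'; apply: ah_neq_bh; rewrite -h'q !compA ah'_bh'.
Qed.

Hypotheses (prodA : has_set_products A) (genL : is_generator L).

(* The index set consists of the annihilators in End(L) of the maps from L into
   Cl rather than of the maps themselves, which do not form a set; as L is a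
   generator, the annihilator of a map determines its kernel. *)
Lemma separating_map :
  exists P (f : Hom L P), Cl P /\
    forall X (f' : Hom L X), Cl X ->
      forall W (g : Hom W L), comp f g = 0 -> comp f' g = 0.
Proof.
pose annihilator X (f : Hom L X) (S : Hom L L -> Prop) :=
  forall h, S h <-> comp f h = 0.
pose J := {S : Hom L L -> Prop |
  exists Xf : {X : Obj A & Hom L X}, Cl (projT1 Xf) /\ annihilator _ (projT2 Xf) S}.
pose rep (j : J) := proj1_sig (constructive_indefinite_description _ (proj2_sig j)).
have repP (j : J) : Cl (projT1 (rep j)) /\ annihilator _ (projT2 (rep j)) (sval j).
  exact: proj2_sig (constructive_indefinite_description _ (proj2_sig j)).
have [P [p prod_p]] := prodA (fun j => projT1 (rep j)).
have [f [pf _]] := prod_p L (fun j => projT2 (rep j)).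
exists P, f; split.
  exact: (closed_product (I := J) closedCl prod_p (fun j => proj1 (repP j))).
move=> X f' ClX W g fg0; apply: NNPP => /genL [h []]; rewrite comp0m -compA.
pose j : J := exist _ (fun h => comp f' h = 0)
  (ex_intro _ (existT _ X f') (conj ClX (fun h => iff_refl _))).
apply/(proj2 (repP j) (comp g h)); rewrite -(pf j) -compA (compA f g h) fg0.
by rewrite comp0m compm0.
Qed.

Lemma I_exists : exists I (i : Hom I L), is_I Cl i.
Proof.
have [P [f [ClP separating]]] := separating_map.
have [K [k ker_k]] := kernel_exists abA f.
exists K, k; split; first exact: kernel_mono ker_k.
split=> [K' k' [X [f' [ClX ker_k']]] | S s _ s_le]; last first.
  exact: s_le (ex_intro _ P (ex_intro _ f (conj ClP ker_k))).
exact: kernel_factor ker_k' (separating _ _ ClX _ _ (proj1 ker_k)).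
Qed.

Lemma cokernel_I_closed I (i : Hom I L) Q (q : Hom L Q) :
  is_I Cl i -> is_cokernel i q -> Cl Q.
Proof.
move=> Ii cok_q.
have [P [f [ClP separating]]] := separating_map.
have [M [m [e [mono_m epi_e me]]]] := image_factorization abA f.
have [r req] : exists r : Hom M Q, comp r e = q.
  apply: (epi_factor abA epi_e) => W g eg0.
  have fg0 : comp f g = 0 by rewrite -me -compA eg0 compm0.
  have [t <-] := le_sub_I Ii (fun X f' ClX => separating X f' ClX W g fg0).
  by rewrite compA (proj1 cok_q) comp0m.
have epi_r : epi r.
  by apply: (epi_of_comp (e := e)); rewrite req; apply: cokernel_epi cok_q.
exact: (closed_subquotient closedCl ClP mono_m epi_r).
Qed.

End IdealOfClosedSubcategory.

(* Every X in Cl is a quotient of a coproduct of copies of the generator Q,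
   one for each map Q -> X. *)
Lemma closed_incl_of_generator (A : preadditive_category)
    (Cl Cl' : Obj A -> Prop) (Q : Obj A) :
  is_abelian A -> has_set_coproducts A ->
  closed_subcategory Cl -> closed_subcategory Cl' ->
  is_generator_for Cl Q -> Cl' Q -> forall X, Cl X -> Cl' X.
Proof.
move=> abA coprodA closedCl closedCl' genQ Cl'Q X ClX.
have [C [c coprod_c]] := coprodA (Hom Q X) (fun _ => Q).
have [phi [phic _]] := coprod_c X (fun h => h).
have [D [d cok_d]] := cokernel_exists abA phi.
have ClD : Cl D := closed_quotient closedCl ClX (cokernel_epi cok_d).
have d0 : d = 0.
  apply: NNPP => /(genQ _ _ ClX ClD d 0) [h []].
  by rewrite comp0m -(phic h) compA (proj1 cok_d) comp0m.
have Cl'C : Cl' C := closed_coproduct closedCl' coprod_c (fun _ => Cl'Q).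
exact: (closed_quotient closedCl' Cl'C (cokernel0_epi cok_d d0)).
Qed.

Theorem proposition2p5 (A : preadditive_category) :
  is_abelian A -> has_set_products A -> has_set_coproducts A ->
  forall L : Obj A, is_generator L ->
  (forall Cl : Obj A -> Prop, closed_subcategory Cl ->
     (exists (I : Obj A) (i : Hom I L), is_I Cl i) /\
     (forall (I : Obj A) (i : Hom I L), is_I Cl i ->
        forall (Q : Obj A) (q : Hom L Q), is_cokernel i q ->
          Cl Q /\ is_generator_for Cl Q)) /\
  (forall Cl Cl' : Obj A -> Prop,
     closed_subcategory Cl -> closed_subcategory Cl' ->
     ~ (forall X, Cl X <-> Cl' X) ->
     forall (I I' : Obj A) (i : Hom I L) (i' : Hom I' L),
       is_I Cl i -> is_I Cl' i' -> ~ (le_sub i i' /\ le_sub i' i)).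
Proof.
move=> abA prodA coprodA L genL; split=> [Cl closedCl | Cl Cl' closedCl closedCl' Cl_neq].
  split; first exact: I_exists.
  move=> I i Ii Q q cok_q; split; first exact: cokernel_I_closed cok_q.
  exact: cokernel_I_generator cok_q.
move=> I I' i i' Ii Ii' [i_le_i' i'_le_i]; apply: Cl_neq => X.
have [Q [q cok_q]] := cokernel_exists abA i.
have cok'_q := cokernel_le_sub i_le_i' i'_le_i cok_q.
have ClQ := cokernel_I_closed abA closedCl prodA genL Ii cok_q.
have Cl'Q := cokernel_I_closed abA closedCl' prodA genL Ii' cok'_q.
have genQ := cokernel_I_generator abA genL Ii cok_q.
have genQ' := cokernel_I_generator abA genL Ii' cok'_q.
split; first exact: (closed_incl_of_generator abA coprodA closedCl closedCl' genQ Cl'Q).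
exact: (closed_incl_of_generator abA coprodA closedCl' closedCl genQ' ClQ).
Qed.
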